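(* Let $f_j$, $j\in J=\{1,\dots,m\}$, be convex functions on $\mathbb{R}^n$, let $D=\{x\in\mathbb{R}^n: f_j(x)\le 0,\ j\in J\}$, and let $f$ be a continuous function on $\mathbb{R}^n$ attaining its minimum on $D$. Assume that $f$ is convex, that each $f_j$ is strongly convex with constant $\mu_j>0$, that $D$ satisfies the Slater condition, and that no point of absolute (unconstrained) minimum of $f$ on $\mathbb{R}^n$ (if such a point exists) belongs to $\operatorname{int} D$. Then the problem $\min\{f(x): x\in D\}$ has a unique solution.
   Context: For each $j\in J$ the set $D_j=\{x: f_j(x)\le 0\}$ is assumed to have nonempty interior. *)

From HB Require Import structures.
From mathcomp Require Import all_boot all_order all_algebra.
From mathcomp Require Import all_classical all_reals all_analysis.
Set Implicit Arguments. Unset Strict Implicit. Unset Printing Implicit Defensive.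
Import Order.TTheory GRing.Theory Num.Theory.
Import numFieldNormedType.Exports.
Local Open Scope ring_scope.
Local Open Scope classical_set_scope.

Definition sqnorm (R : realType) (n : nat) (x : 'rV[R]_n) : R :=
  \sum_(i < n) (x ord0 i) ^+ 2.

Definition convex_fun (R : realType) (n : nat) (g : 'rV[R]_n -> R) : Prop :=
  forall (x y : 'rV[R]_n) (t : R), 0 <= t -> t <= 1 ->
    g (t *: x + (1 - t) *: y) <= t * g x + (1 - t) * g y.

Definition strongly_convex (R : realType) (n : nat) (mu : R)
    (g : 'rV[R]_n -> R) : Prop :=
  forall (x y : 'rV[R]_n) (t : R), 0 <= t -> t <= 1 ->
    g (t *: x + (1 - t) *: y)
      <= t * g x + (1 - t) * g y - mu / 2 * t * (1 - t) * sqnorm (x - y).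

Definition feasible (R : realType) (n m : nat) (fs : 'I_m -> 'rV[R]_n -> R)
  : set 'rV[R]_n := [set x | forall j, fs j x <= 0].

Definition slater (R : realType) (n m : nat) (fs : 'I_m -> 'rV[R]_n -> R)
  : Prop := exists x : 'rV[R]_n, forall j, fs j x < 0.

Definition is_min_on (R : realType) (n : nat) (g : 'rV[R]_n -> R)
  (A : set 'rV[R]_n) (x : 'rV[R]_n) : Prop :=
  A x /\ forall y, A y -> g x <= g y.

From HB Require Import structures.
From mathcomp Require Import all_boot all_order all_algebra.
From mathcomp Require Import all_classical all_reals all_analysis.
From mathcomp Require Import ring lra.
Import Order.TTheory GRing.Theory Num.Theory.
Import numFieldNormedType.Exports.
Local Open Scope ring_scope.
Local Open Scope classical_set_scope.

(* If x and y were two distinct solutions, strong convexity would make every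
   f_j strictly negative at their midpoint z, so z lies in the interior of D,
   and by convexity of f it is again a solution.  A convex function that is
   minimal on a neighbourhood of z is minimal on all of R^n, so z would be an
   absolute minimum of f inside int D, which is excluded. *)

Section ConvexFunction.
Context {R : realType} {n : nat} {g : 'rV[R]_n -> R}.
Hypothesis g_convex : convex_fun g.

Lemma convex_fun_avg_le (M : R) (k : nat) (a : 'I_k -> 'rV[R]_n) :
  (0 < k)%N -> (forall i, g (a i) <= M) ->
  g (k%:R^-1 *: \sum_(i < k) a i) <= M.
Proof.
elim: k a => // -[_ a _ gaM|k IH a _ gaM].
  by rewrite big_ord1 invr1 scale1r.
have g_avg := IH (a \o widen_ord (leqnSn _)) isT (fun i => gaM _).
have g_last := gaM ord_max.
set N : R := k.+1%:R in g_avg *.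
have N_gt0 : 0 < N by rewrite ltr0n.
have -> : k.+2%:R = N + 1 :> R by rewrite natr1.
clearbody N.
set t := N / (N + 1).
have t_ge0 : 0 <= t by apply: divr_ge0; lra.
have t_le1 : t <= 1 by rewrite ler_pdivrMr; lra.
have -> : (N + 1)^-1 *: \sum_(i < k.+2) a i
    = t *: (N^-1 *: \sum_(i < k.+1) a (widen_ord (leqnSn _) i))
      + (1 - t) *: a ord_max.
  rewrite big_ord_recr /= scalerDr scalerA.
  have [N_neq0 N1_neq0] : N != 0 /\ N + 1 != 0 by rewrite !gt_eqF //; lra.
  by congr (_ *: _ + _ *: _); rewrite /t; field; rewrite ?N_neq0 ?N1_neq0.
apply: le_trans (g_convex _ _ _ t_ge0 t_le1) _; nra.
Qed.

Lemma convex_fun_segment_le_max (z v : 'rV[R]_n) (N c : R) :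
  0 < N -> `|c| <= N ->
  g (z + c *: v) <= Num.max (g (z + N *: v)) (g (z - N *: v)).
Proof.
move=> N_gt0; rewrite ler_norml => /andP[Nc cN].
set t := (N + c) / (2 * N).
have t_ge0 : 0 <= t by apply: divr_ge0; lra.
have t_le1 : t <= 1 by rewrite ler_pdivrMr; lra.
have -> : z + c *: v = t *: (z + N *: v) + (1 - t) *: (z - N *: v).
  by apply/rowP => i; rewrite !mxE /t; field; lra.
apply: le_trans (g_convex _ _ _ t_ge0 t_le1) _.
have [a_le_b|b_lt_a] := leP (g (z + N *: v)) (g (z - N *: v)); nra.
Qed.

Lemma convex_fun_bounded_on_ball (z : 'rV[R]_n) :
  exists M, forall y, ball z 1 y -> g y <= M.
Proof.
have [n0|n_gt0] := posnP n.
  exists (g z) => y _; suff -> : y = z by [].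
  by apply/rowP => i; have := ltn_ord i; rewrite [X in (_ < X)%N]n0.
set N : R := n%:R.
have N_gt0 : 0 < N by rewrite ltr0n.
exists (\sum_(i < n) (`|g (z + N *: 'e_i)| + `|g (z - N *: 'e_i)|)).
move=> y [_ zy].
(* y is the average of the n points z + n (y - z)_i e_i, each lying on the
   coordinate segment of half-length n about z. *)
pose a i := z + (N * (y - z) 0 i) *: 'e_i.
have -> : y = N^-1 *: \sum_(i < n) a i.
  under eq_bigr => i _ do rewrite /a -scalerA.
  rewrite big_split /= sumr_const card_ord -scaler_nat -scaler_sumr.
  rewrite -row_sum_delta scalerDr !scalerA mulVf ?gt_eqF // !scale1r.
  by rewrite addrC subrK.
apply: convex_fun_avg_le => // i; rewrite /a.
have coord_le : `|N * (y - z) 0 i| <= N.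
  rewrite normrM gtr0_norm // ler_piMr ?ltW //.
  by have := zy 0 i; rewrite -ball_normE /ball_ /= !mxE distrC.
apply: le_trans (convex_fun_segment_le_max _ _ _ _ N_gt0 coord_le) _.
rewrite (bigD1 i) //= ge_max.
have rest_ge0 : 0 <= \sum_(j < n | j != i)
    (`|g (z + N *: 'e_j)| + `|g (z - N *: 'e_j)|).
  by apply: sumr_ge0 => j _; rewrite addr_ge0.
set gp := g (z + N *: 'e_i); set gm := g (z - N *: 'e_i).
have := ler_norm gp; have := ler_norm gm.
have := normr_ge0 gp; have := normr_ge0 gm.
by move=> *; apply/andP; split; lra.
Qed.

Lemma convex_fun_sublevel_nbhs {z : 'rV[R]_n} {c : R} :
  g z < c -> nbhs z [set y | g y <= c].
Proof.
move=> gz_c; have [M gM] := convex_fun_bounded_on_ball z.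
have gz_M : g z <= M by apply: gM; apply: ballxx.
set s := (c - g z) / (M - g z + (c - g z)).
have s_gt0 : 0 < s by apply: divr_gt0; lra.
have s_le1 : s <= 1 by rewrite ler_pdivrMr; lra.
have sE : s * (M - g z + (c - g z)) = c - g z.
  by rewrite divfK // gt_eqF //; lra.
apply/nbhs_ballP; exists s => // y [_ zy].
(* Stretch y away from z by the factor 1/s to land in ball z 1. *)
pose w := z + s^-1 *: (y - z).
have gw_M : g w <= M.
  apply: gM; split => // i j; have := zy i j.
  rewrite -!ball_normE /ball_ /= /w !mxE.
  have -> : z i j - (z i j + s^-1 * (y i j - z i j)) = s^-1 * (z i j - y i j).
    by ring.
  by rewrite normrM gtr0_norm ?invr_gt0 // ltr_pdivrMl // mulr1.
have -> : y = s *: w + (1 - s) *: z.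
  by apply/rowP => i; rewrite /w !mxE; field; rewrite gt_eqF.
apply: le_trans (g_convex _ _ _ (ltW s_gt0) s_le1) _; nra.
Qed.

Lemma convex_fun_min_on_nbhs {A : set 'rV[R]_n} {z : 'rV[R]_n} :
  nbhs z A -> is_min_on g A z -> is_min_on g setT z.
Proof.
move=> /nbhs_ballP[e /= e_gt0 zeA] [_ zmin]; split => // w _.
have wz_ge0 := normr_ge0 (w - z).
set t : R := e / (2 * (`|w - z| + e)).
have t_gt0 : 0 < t by apply: divr_gt0; lra.
have t_le1 : t <= 1 by rewrite ler_pdivrMr; lra.
have t_small : t * `|w - z| < e.
  by rewrite /t mulrAC ltr_pdivrMr; [nra | lra].
pose p := t *: w + (1 - t) *: z.
have Ap : A p.
  apply: zeA; rewrite -ball_normE /ball_ /=.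
  have -> : z - p = t *: (z - w) by apply/rowP => i; rewrite /p !mxE; ring.
  by rewrite normrZ gtr0_norm // distrC.
have := zmin p Ap; have := g_convex w z t (ltW t_gt0) t_le1.
rewrite -/p; nra.
Qed.

End ConvexFunction.

Lemma sqnorm_gt0 (R : realType) (n : nat) (v : 'rV[R]_n) :
  v != 0 -> 0 < sqnorm v.
Proof.
move=> v_neq0; rewrite lt_neqAle sumr_ge0 ?andbT => [|i _]; last exact: sqr_ge0.
apply: contra v_neq0 => /eqP/esym/psumr_eq0P v0.
apply/eqP/rowP => i; rewrite mxE.
by have /eqP := v0 (fun k _ => sqr_ge0 _) i isT; rewrite sqrf_eq0 => /eqP.
Qed.

Lemma strongly_convex_lt {R : realType} {n : nat} {mu : R}
    {g : 'rV[R]_n -> R} {x y : 'rV[R]_n} {t : R} :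
  0 < mu -> strongly_convex mu g -> x != y -> 0 < t -> t < 1 ->
  g (t *: x + (1 - t) *: y) < t * g x + (1 - t) * g y.
Proof.
move=> mu_gt0 g_sc xy t_gt0 t_lt1.
have xy_gt0 : 0 < sqnorm (x - y) by apply: sqnorm_gt0; rewrite subr_eq0.
apply: le_lt_trans (g_sc x y t (ltW t_gt0) (ltW t_lt1)) _.
rewrite ltrBlDr ltrDl !mulr_gt0 ?divr_gt0 //; lra.
Qed.

Lemma feasible_interior {R : realType} {n m : nat}
    {fs : 'I_m -> 'rV[R]_n -> R} {z : 'rV[R]_n} :
  (forall j, convex_fun (fs j)) -> (forall j, fs j z < 0) ->
  interior (feasible fs) z.
Proof.
move=> fs_convex fs_z.
exact: filter_forall (fun j => convex_fun_sublevel_nbhs (fs_convex j) (fs_z j)).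
Qed.

Theorem theorem1p1p3 (R : realType) (n m : nat)
  (fs : 'I_m -> 'rV[R]_n -> R) (f : 'rV[R]_n -> R) (mu : 'I_m -> R) :
  (forall j, convex_fun (fs j)) ->
  (forall j, (interior [set x | fs j x <= 0]) !=set0) ->
  continuous f ->
  (exists x, is_min_on f (feasible fs) x) ->
  convex_fun f ->
  (forall j, 0 < mu j) ->
  (forall j, strongly_convex (mu j) (fs j)) ->
  slater fs ->
  (forall x, is_min_on f setT x -> ~ (interior (feasible fs)) x) ->
  exists x, is_min_on f (feasible fs) x /\
    forall y, is_min_on f (feasible fs) y -> y = x.
Proof.
move=> fs_convex _ _ [x [Dx xmin]] f_convex mu_gt0 fs_sc _ no_free_min.
exists x; split => // y [Dy ymin]; have [//|yx] := eqVneq y x.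
have half_gt0 : 0 < 2^-1 :> R by rewrite invr_gt0.
have half_lt1 : 2^-1 < 1 :> R by rewrite invf_lt1 // ltr1n.
pose z := 2^-1 *: y + (1 - 2^-1) *: x.
have z_int : interior (feasible fs) z.
  apply: feasible_interior => // j.
  have := strongly_convex_lt (mu_gt0 j) (fs_sc j) yx half_gt0 half_lt1.
  have := Dx j; have := Dy j; lra.
have zmin : is_min_on f (feasible fs) z.
  split=> [|w Dw]; first exact: interior_subset.
  have := f_convex y x _ (ltW half_gt0) (ltW half_lt1).
  have := ymin x Dx; have := xmin w Dw; lra.
by case: (no_free_min z (convex_fun_min_on_nbhs f_convex z_int zmin) z_int).
Qed.
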